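(* Let $\mathfrak{n}$ be the real $7$-dimensional Lie algebra with basis $e_1,\dots,e_7$ whose nonzero brackets (up to antisymmetry) are $[e_1,e_2]=e_5$, $[e_1,e_3]=e_6$, $[e_1,e_4]=2e_7$, $[e_2,e_3]=e_4$, $[e_2,e_6]=e_7$, $[e_3,e_5]=-e_7$, $[e_3,e_6]=e_7$. Then $\mathfrak{n}$ is not an Einstein nilradical.
   Context: A real nilpotent Lie algebra $\mathfrak{n}$ is called an Einstein nilradical if it admits an inner product such that the left-invariant Riemannian metric it defines on the simply connected nilpotent Lie group with Lie algebra $\mathfrak{n}$ is a nilsoliton, i.e. its Ricci operator satisfies $\mathrm{Ric}=c\,\mathrm{Id}+D$ for some $c\in\mathbb{R}$ and some derivation $D$ of $\mathfrak{n}$. Brackets of basis elements not listed are zero. *)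

From mathcomp Require Import all_boot all_order all_algebra.
From mathcomp Require Import reals.
Set Implicit Arguments. Unset Strict Implicit. Unset Printing Implicit Defensive.
Import Order.TTheory GRing.Theory Num.Theory.
Local Open Scope ring_scope.

Section LieDefs.
Variable R : realType.
Variable n : nat.

(* Bracket on R^n determined by the brackets of the standard basis vectors:
   c i j = [e_i, e_j]. *)
Definition bracket_of (c : 'I_n -> 'I_n -> 'cV[R]_n) (x y : 'cV[R]_n) : 'cV[R]_n :=
  \sum_(i < n) \sum_(j < n) (x i 0 * y j 0) *: c i j.

Definition derivation (br : 'cV[R]_n -> 'cV[R]_n -> 'cV[R]_n) (D : 'M[R]_n) : Prop :=
  forall x y, D *m br x y = br (D *m x) y + br x (D *m y).

(* The inner product for which the columns of the invertible matrix B form an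
   orthonormal basis; every inner product on R^n is of this form. *)
Definition ip (B : 'M[R]_n) (x y : 'cV[R]_n) : R :=
  ((invmx B *m x)^T *m (invmx B *m y)) 0 0.

(* Ricci form of the left-invariant metric defined by ip B on the simply
   connected nilpotent Lie group with Lie algebra (R^n, br), computed with the
   orthonormal basis X_i = col i B:
   <Ric x, y> = -1/2 sum_{i,j} <[x,X_i],X_j><[y,X_i],X_j>
                + 1/4 sum_{i,j} <[X_i,X_j],x><[X_i,X_j],y>. *)
Definition ricci_form (br : 'cV[R]_n -> 'cV[R]_n -> 'cV[R]_n) (B : 'M[R]_n)
    (x y : 'cV[R]_n) : R :=
  - (1 / 2) * (\sum_(i < n) \sum_(j < n)
       ip B (br x (col i B)) (col j B) * ip B (br y (col i B)) (col j B))
  + (1 / 4) * (\sum_(i < n) \sum_(j < n)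
       ip B (br (col i B) (col j B)) x * ip B (br (col i B) (col j B)) y).

Definition is_ricci_operator (br : 'cV[R]_n -> 'cV[R]_n -> 'cV[R]_n) (B : 'M[R]_n)
    (Ric : 'M[R]_n) : Prop :=
  forall x y, ip B (Ric *m x) y = ricci_form br B x y.

Definition nilsoliton (br : 'cV[R]_n -> 'cV[R]_n -> 'cV[R]_n) (B : 'M[R]_n) : Prop :=
  exists (c : R) (D : 'M[R]_n),
    derivation br D /\ is_ricci_operator br B (c%:M + D).

Definition einstein_nilradical (br : 'cV[R]_n -> 'cV[R]_n -> 'cV[R]_n) : Prop :=
  exists B : 'M[R]_n, B \in unitmx /\ nilsoliton br B.

End LieDefs.

(* Standard basis vector e_(k+1) of R^7 (0-based index k). *)
Definition ev (R : realType) (k : nat) : 'cV[R]_7 := delta_mx (inord k) 0.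

Definition n7_const (R : realType) (i j : 'I_7) : 'cV[R]_7 :=
  match nat_of_ord i, nat_of_ord j with
  | 0, 1 => ev R 4   | 1, 0 => - ev R 4
  | 0, 2 => ev R 5   | 2, 0 => - ev R 5
  | 0, 3 => 2%:R *: ev R 6 | 3, 0 => - (2%:R *: ev R 6)
  | 1, 2 => ev R 3   | 2, 1 => - ev R 3
  | 1, 5 => ev R 6   | 5, 1 => - ev R 6
  | 2, 4 => - ev R 6 | 4, 2 => ev R 6
  | 2, 5 => ev R 6   | 5, 2 => - ev R 6
  | _, _ => 0
  end.

Definition n7_bracket (R : realType) : 'cV[R]_7 -> 'cV[R]_7 -> 'cV[R]_7 :=
  bracket_of (@n7_const R).

From mathcomp Require Import all_boot all_order all_algebra.
From mathcomp Require Import boolp reals.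
From mathcomp Require Import ring lra.
Set Implicit Arguments. Unset Strict Implicit. Unset Printing Implicit Defensive.
Import Order.TTheory GRing.Theory Num.Theory.
Local Open Scope ring_scope.

(* Write the metric in an orthonormal frame, so that the bracket becomes a
   tensor [T] on which matrices act by [der_action]. The Ricci operator is a
   moment map for this action: [tr (Ric A) = <der_action A T, T> / 4]. Hence
   [Ric = c + D] is trace-orthogonal to every derivation, and
   [tr Ric = - |T|^2 / 4]. The derivations of this algebra form an explicit
   15-parameter family; orthogonality to two diagonal ones fixes the diagonal
   of [D], and [c <> 0] since the algebra is not abelian. One then exhibits a
   nonzero derivation [psi] commuting with [D] and trace-orthogonal to all
   derivations. For its frame matrix [P], [tr (Ric [P, P^T]) = 0] by
   commutation, while the moment map turns it into [|der_action P^T T|^2 / 4];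
   so the adjoint of [psi] is a derivation as well, and orthogonality gives
   [|P|^2 = tr (P^T P) = 0]. *)

Section DerivationAction.
Variables (R : realFieldType) (n : nat).
Local Notation I := 'I_n.

(* [S i j k] is the [k]-th coordinate of [S(e_i, e_j)]. *)
Definition tensor := I -> I -> I -> R.
Implicit Types (S U T : tensor) (A : 'M[R]_n).

Definition act1 A S : tensor := fun i j k => \sum_m A m i * S m j k.
Definition act2 A S : tensor := fun i j k => \sum_m A m j * S i m k.
Definition act3 A S : tensor := fun i j k => \sum_m A k m * S i j m.
Definition tsub S U : tensor := fun i j k => S i j k - U i j k.

(* The infinitesimal action (x, y) |-> A S(x, y) - S(A x, y) - S(x, A y); it
   vanishes iff [A] is a derivation of [S]. *)
Definition der_action A S : tensor := tsub (tsub (act3 A S) (act1 A S)) (act2 A S).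

Definition tdot S U : R := \sum_i \sum_j \sum_k S i j k * U i j k.

Lemma tensorP S U : (forall i j k, S i j k = U i j k) -> S = U.
Proof. by move=> eqSU; do 3!apply: funext => ?; apply: eqSU. Qed.

Lemma act1B A S U : act1 A (tsub S U) = tsub (act1 A S) (act1 A U).
Proof. by apply: tensorP => i j k; rewrite /act1 /tsub -sumrB; apply: eq_bigr => m _; rewrite mulrBr. Qed.
Lemma act2B A S U : act2 A (tsub S U) = tsub (act2 A S) (act2 A U).
Proof. by apply: tensorP => i j k; rewrite /act2 /tsub -sumrB; apply: eq_bigr => m _; rewrite mulrBr. Qed.
Lemma act3B A S U : act3 A (tsub S U) = tsub (act3 A S) (act3 A U).
Proof. by apply: tensorP => i j k; rewrite /act3 /tsub -sumrB; apply: eq_bigr => m _; rewrite mulrBr. Qed.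

Lemma act1Bl A A' S : act1 (A - A') S = tsub (act1 A S) (act1 A' S).
Proof. by apply: tensorP => i j k; rewrite /act1 /tsub -sumrB; apply: eq_bigr => m _; rewrite !mxE mulrBl. Qed.
Lemma act2Bl A A' S : act2 (A - A') S = tsub (act2 A S) (act2 A' S).
Proof. by apply: tensorP => i j k; rewrite /act2 /tsub -sumrB; apply: eq_bigr => m _; rewrite !mxE mulrBl. Qed.
Lemma act3Bl A A' S : act3 (A - A') S = tsub (act3 A S) (act3 A' S).
Proof. by apply: tensorP => i j k; rewrite /act3 /tsub -sumrB; apply: eq_bigr => m _; rewrite !mxE mulrBl. Qed.

Lemma act1M A A' S : act1 A (act1 A' S) = act1 (A' *m A) S.
Proof.
apply: tensorP => i j k; rewrite /act1; under eq_bigr => m _ do rewrite big_distrr.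
rewrite exchange_big; apply: eq_bigr => l _; rewrite mxE big_distrl.
by apply: eq_bigr => m _ /=; rewrite mulrA [A m i * _]mulrC.
Qed.
Lemma act2M A A' S : act2 A (act2 A' S) = act2 (A' *m A) S.
Proof.
apply: tensorP => i j k; rewrite /act2; under eq_bigr => m _ do rewrite big_distrr.
rewrite exchange_big; apply: eq_bigr => l _; rewrite mxE big_distrl.
by apply: eq_bigr => m _ /=; rewrite mulrA [A m j * _]mulrC.
Qed.
Lemma act3M A A' S : act3 A (act3 A' S) = act3 (A *m A') S.
Proof.
apply: tensorP => i j k; rewrite /act3; under eq_bigr => m _ do rewrite big_distrr.
rewrite exchange_big; apply: eq_bigr => l _; rewrite mxE big_distrl.
by apply: eq_bigr => m _ /=; rewrite mulrA.
Qed.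

Lemma act12C A A' S : act1 A (act2 A' S) = act2 A' (act1 A S).
Proof.
apply: tensorP => i j k; rewrite /act1 /act2; under eq_bigr => m _ do rewrite big_distrr.
rewrite exchange_big; apply: eq_bigr => l _; rewrite big_distrr.
by apply: eq_bigr => m _ /=; rewrite !mulrA [A m i * _]mulrC.
Qed.
Lemma act13C A A' S : act1 A (act3 A' S) = act3 A' (act1 A S).
Proof.
apply: tensorP => i j k; rewrite /act1 /act3; under eq_bigr => m _ do rewrite big_distrr.
rewrite exchange_big; apply: eq_bigr => l _; rewrite big_distrr.
by apply: eq_bigr => m _ /=; rewrite !mulrA [A m i * _]mulrC.
Qed.
Lemma act23C A A' S : act2 A (act3 A' S) = act3 A' (act2 A S).
Proof.
apply: tensorP => i j k; rewrite /act2 /act3; under eq_bigr => m _ do rewrite big_distrr.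
rewrite exchange_big; apply: eq_bigr => l _; rewrite big_distrr.
by apply: eq_bigr => m _ /=; rewrite !mulrA [A m j * _]mulrC.
Qed.

Lemma der_action_commutator A A' S :
  der_action (A *m A' - A' *m A) S =
  tsub (der_action A (der_action A' S)) (der_action A' (der_action A S)).
Proof.
rewrite /der_action !(act1B, act2B, act3B, act1Bl, act2Bl, act3Bl, act1M, act2M, act3M).
rewrite -!act12C -!act13C -!act23C.
by apply: tensorP => i j k; rewrite /tsub; ring.
Qed.

Lemma tdotBl S S' U : tdot (tsub S S') U = tdot S U - tdot S' U.
Proof.
rewrite /tdot -sumrB; apply: eq_bigr => i _; rewrite -sumrB; apply: eq_bigr => j _.
by rewrite -sumrB; apply: eq_bigr => k _; rewrite /tsub mulrBl.
Qed.
Lemma tdotBr S U U' : tdot S (tsub U U') = tdot S U - tdot S U'.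
Proof.
rewrite /tdot -sumrB; apply: eq_bigr => i _; rewrite -sumrB; apply: eq_bigr => j _.
by rewrite -sumrB; apply: eq_bigr => k _; rewrite /tsub mulrBr.
Qed.

Lemma tdot_rot S U : tdot S U = \sum_j \sum_k \sum_i S i j k * U i j k.
Proof. by rewrite /tdot exchange_big; apply: eq_bigr => j _; rewrite exchange_big. Qed.

Lemma tdot_swap12 S U : tdot S U = \sum_i \sum_k \sum_j S i j k * U i j k.
Proof. by apply: eq_bigr => i _; rewrite exchange_big. Qed.

Lemma sum_bilinear_swap (b : I -> I -> R) (x y : I -> R) :
  \sum_i (\sum_m b m i * x m) * y i = \sum_i x i * \sum_m b i m * y m.
Proof.
under eq_bigr => i _ do rewrite big_distrl.
rewrite exchange_big; apply: eq_bigr => i _; rewrite big_distrr.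
by apply: eq_bigr => m _ /=; rewrite mulrCA mulrA.
Qed.

Lemma act1_adj A S U : tdot (act1 A S) U = tdot S (act1 A^T U).
Proof.
rewrite !tdot_rot; apply: eq_bigr => j _; apply: eq_bigr => k _.
rewrite sum_bilinear_swap; apply: eq_bigr => i _; congr (_ * _).
by apply: eq_bigr => m _; rewrite mxE.
Qed.
Lemma act2_adj A S U : tdot (act2 A S) U = tdot S (act2 A^T U).
Proof.
rewrite !tdot_swap12; apply: eq_bigr => i _; apply: eq_bigr => k _.
rewrite sum_bilinear_swap; apply: eq_bigr => j _; congr (_ * _).
by apply: eq_bigr => m _; rewrite mxE.
Qed.
Lemma act3_adj A S U : tdot (act3 A S) U = tdot S (act3 A^T U).
Proof.
apply: eq_bigr => i _; apply: eq_bigr => j _.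
rewrite (sum_bilinear_swap (fun m k => A k m)); apply: eq_bigr => k _; congr (_ * _).
by apply: eq_bigr => m _; rewrite mxE.
Qed.

Lemma der_action_adj A S U : tdot (der_action A S) U = tdot S (der_action A^T U).
Proof. by rewrite /der_action !(tdotBl, tdotBr) act1_adj act2_adj act3_adj. Qed.

Lemma tdot_der_action_commutator A S :
  tdot (der_action (A *m A^T - A^T *m A) S) S =
  tdot (der_action A^T S) (der_action A^T S) - tdot (der_action A S) (der_action A S).
Proof. by rewrite der_action_commutator tdotBl !der_action_adj trmxK. Qed.

Lemma sum_exchange2 (F : I -> I -> I -> I -> R) :
  \sum_a \sum_b \sum_c \sum_d F a b c d = \sum_c \sum_d \sum_a \sum_b F a b c d.
Proof.
under eq_bigr => a _ do rewrite exchange_big.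
under eq_bigr => a _ do under eq_bigr => c _ do rewrite exchange_big.
by rewrite exchange_big; apply: eq_bigr => c _; rewrite exchange_big.
Qed.

Definition gram_in T : 'M[R]_n := \matrix_(a, b) \sum_i \sum_j T a i j * T b i j.
Definition gram_out T : 'M[R]_n := \matrix_(a, b) \sum_i \sum_j T i j a * T i j b.
Definition ricci_tensor T : 'M[R]_n := (1 / 4) *: gram_out T - (1 / 2) *: gram_in T.

Lemma trace_gram_in T A : \tr (gram_in T *m A) = tdot (act1 A T) T.
Proof.
transitivity (\sum_a \sum_b \sum_j \sum_k T a j k * T b j k * A b a).
  apply: eq_bigr => a _; rewrite mxE; apply: eq_bigr => b _.
  by rewrite mxE big_distrl; apply: eq_bigr => j _; rewrite big_distrl.
rewrite sum_exchange2 tdot_rot; apply: eq_bigr => j _; apply: eq_bigr => k _.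
apply: eq_bigr => a _; rewrite /act1 big_distrl; apply: eq_bigr => b _ /=; ring.
Qed.

Lemma trace_gram_out T A : \tr (gram_out T *m A) = tdot (act3 A T) T.
Proof.
rewrite mxtrace_mulC.
transitivity (\sum_a \sum_b \sum_i \sum_j A a b * (T i j b * T i j a)).
  apply: eq_bigr => a _; rewrite mxE; apply: eq_bigr => b _.
  by rewrite mxE big_distrr; apply: eq_bigr => i _; rewrite big_distrr.
rewrite sum_exchange2; apply: eq_bigr => i _; apply: eq_bigr => j _.
apply: eq_bigr => k _; rewrite /act3 big_distrl; apply: eq_bigr => m _ /=; ring.
Qed.

Lemma tdot_act2_antisym T A : (forall i j k, T j i k = - T i j k) ->
  tdot (act2 A T) T = tdot (act1 A T) T.
Proof.
move=> antiT; rewrite /tdot exchange_big; apply: eq_bigr => a _; apply: eq_bigr => b _.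
apply: eq_bigr => k _; rewrite /act1 /act2 !big_distrl; apply: eq_bigr => m _ /=.
by rewrite (antiT b m) (antiT b a); ring.
Qed.

Lemma trace_ricci_tensor T A : (forall i j k, T j i k = - T i j k) ->
  \tr (ricci_tensor T *m A) = 1 / 4 * tdot (der_action A T) T.
Proof.
move=> antiT; rewrite mulmxBl -!scalemxAl linearB !linearZ /=.
rewrite (trace_gram_in T) (trace_gram_out T) /der_action !tdotBl tdot_act2_antisym //.
by field.
Qed.

Lemma tdot_der_action1 S : tdot (der_action 1%:M S) S = - tdot S S.
Proof.
have id_sum (f : I -> R) l : \sum_m (1%:M : 'M[R]_n) m l * f m = f l.
  rewrite (bigD1 l) //= big1 ?addr0 => [|m /negbTE neq_ml]; first by rewrite mxE eqxx mul1r.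
  by rewrite mxE neq_ml mul0r.
have id_sumT (f : I -> R) l : \sum_m (1%:M : 'M[R]_n) l m * f m = f l.
  by rewrite -[RHS]id_sum; apply: eq_bigr => m _; rewrite !mxE eq_sym.
rewrite /tdot -sumrN; apply: eq_bigr => i _; rewrite -sumrN; apply: eq_bigr => j _.
rewrite -sumrN; apply: eq_bigr => k _.
by rewrite /der_action /tsub /act1 /act2 /act3 !id_sum id_sumT; ring.
Qed.

Lemma tdot0l S U : (forall i j k, S i j k = 0) -> tdot S U = 0.
Proof.
by move=> S0; do 3!(apply: big1 => ? _); rewrite S0 mul0r.
Qed.

Lemma tdot_self_eq0 S : tdot S S = 0 -> forall i j k, S i j k = 0.
Proof.
move=> S0 i j k; apply/eqP; rewrite -sqrf_eq0 expr2; apply/eqP.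
have sq_ge0 (x : R) : 0 <= x * x by rewrite -expr2 sqr_ge0.
have S0i : \sum_j \sum_k S i j k * S i j k = 0.
  by apply: (psumr_eq0P _ S0) => // ? _; do 2!(apply: sumr_ge0 => ? _); exact: sq_ge0.
have S0ij : \sum_k S i j k * S i j k = 0.
  by apply: (psumr_eq0P _ S0i) => // ? _; apply: sumr_ge0 => ? _; exact: sq_ge0.
by apply: (psumr_eq0P _ S0ij) => // ? _; exact: sq_ge0.
Qed.

Lemma mxtrace_tr_mul_eq0 (A : 'M[R]_n) : \tr (A^T *m A) = 0 -> A = 0.
Proof.
move=> trA0; apply/matrixP => a b; rewrite mxE; apply/eqP; rewrite -sqrf_eq0 expr2; apply/eqP.
have sq_ge0 (x : R) : 0 <= x * x by rewrite -expr2 sqr_ge0.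
have diagE l : (A^T *m A) l l = \sum_m A m l * A m l.
  by rewrite mxE; apply: eq_bigr => m _; rewrite mxE.
have colb0 : \sum_m A m b * A m b = 0.
  rewrite -diagE; apply: (psumr_eq0P _ trA0) => // l _.
  by rewrite diagE; apply: sumr_ge0 => m _; exact: sq_ge0.
by apply: (psumr_eq0P _ colb0) => // m _; exact: sq_ge0.
Qed.

End DerivationAction.

Section StructureTensor.
Variables (R : realType) (n : nat) (cst : 'I_n -> 'I_n -> 'cV[R]_n).
Local Notation br := (bracket_of cst).
Implicit Types (x y : 'cV[R]_n) (Y : 'M[R]_n).

Lemma mulmx_sum_col (A : 'M[R]_n) (v : 'cV[R]_n) : A *m v = \sum_m v m 0 *: col m A.
Proof.
apply/matrixP => i j; rewrite !mxE summxE; apply: eq_bigr => m _.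
by rewrite !mxE (ord1 j) mulrC.
Qed.

Lemma bracket_of_suml (a : 'I_n -> R) (v : 'I_n -> 'cV[R]_n) y :
  br (\sum_m a m *: v m) y = \sum_m a m *: br (v m) y.
Proof.
rewrite /bracket_of.
under eq_bigr => i _ do under eq_bigr => j _ do rewrite summxE mulr_suml scaler_suml.
under eq_bigr => i _ do rewrite exchange_big.
rewrite exchange_big; apply: eq_bigr => m _.
rewrite scaler_sumr; apply: eq_bigr => i _; rewrite scaler_sumr; apply: eq_bigr => j _.
by rewrite !mxE scalerA mulrA.
Qed.

Lemma bracket_of_sumr (a : 'I_n -> R) (v : 'I_n -> 'cV[R]_n) x :
  br x (\sum_m a m *: v m) = \sum_m a m *: br x (v m).
Proof.
rewrite /bracket_of.
under eq_bigr => i _ do under eq_bigr => j _ do rewrite summxE mulr_sumr scaler_suml.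
under eq_bigr => i _ do rewrite exchange_big.
rewrite exchange_big; apply: eq_bigr => m _.
rewrite scaler_sumr; apply: eq_bigr => i _; rewrite scaler_sumr; apply: eq_bigr => j _.
by rewrite !mxE scalerA mulrCA.
Qed.

Lemma bracket_ofC : (forall i j, cst j i = - cst i j) -> forall x y, br y x = - br x y.
Proof.
move=> cstC x y; rewrite /bracket_of exchange_big -sumrN; apply: eq_bigr => i _.
by rewrite -sumrN; apply: eq_bigr => j _; rewrite cstC scalerN mulrC.
Qed.

Definition derivation_defect Y x y : 'cV[R]_n :=
  Y *m br x y - (br (Y *m x) y + br x (Y *m y)).

Lemma derivation_defectP Y : derivation br Y <-> forall x y, derivation_defect Y x y = 0.
Proof.
split=> derY x y; first by rewrite /derivation_defect derY subrr.
by apply/eqP; rewrite -subr_eq0; apply/eqP; exact: derY.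
Qed.

Lemma mulmx_sum_scale Y (a : 'I_n -> R) (v : 'I_n -> 'cV[R]_n) :
  Y *m (\sum_m a m *: v m) = \sum_m a m *: (Y *m v m).
Proof. by rewrite mulmx_sumr; apply: eq_bigr => m _; rewrite scalemxAr. Qed.

Lemma derivation_defect_suml Y (a : 'I_n -> R) (v : 'I_n -> 'cV[R]_n) y :
  derivation_defect Y (\sum_m a m *: v m) y = \sum_m a m *: derivation_defect Y (v m) y.
Proof.
rewrite /derivation_defect mulmx_sum_scale !bracket_of_suml mulmx_sum_scale.
by rewrite -big_split -sumrB; apply: eq_bigr => m _; rewrite scalerBr scalerDr.
Qed.

Lemma derivation_defect_sumr Y (a : 'I_n -> R) (v : 'I_n -> 'cV[R]_n) x :
  derivation_defect Y x (\sum_m a m *: v m) = \sum_m a m *: derivation_defect Y x (v m).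
Proof.
rewrite /derivation_defect mulmx_sum_scale !bracket_of_sumr mulmx_sum_scale.
by rewrite -big_split -sumrB; apply: eq_bigr => m _; rewrite scalerBr scalerDr.
Qed.

Variable B : 'M[R]_n.
Hypothesis unitB : B \in unitmx.

Lemma frame_expand x : x = \sum_m (invmx B *m x) m 0 *: col m B.
Proof. by rewrite -mulmx_sum_col mulKVmx. Qed.

Lemma invmx_mulmx_eq0 x : invmx B *m x = 0 -> x = 0.
Proof. by move=> gx0; rewrite -(mulKVmx unitB x) gx0 mulmx0. Qed.

Lemma ip_col x j : ip B x (col j B) = (invmx B *m x) j 0.
Proof.
have gcol : invmx B *m col j B = delta_mx j 0 by rewrite colE mulmxA mulVmx // mul1mx.
by rewrite /ip gcol -colE !mxE.
Qed.

Definition structure_tensor : tensor R n :=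
  fun i j k => (invmx B *m br (col i B) (col j B)) k 0.

Lemma structure_tensorC : (forall i j, cst j i = - cst i j) ->
  forall i j k, structure_tensor j i k = - structure_tensor i j k.
Proof. by move=> cstC i j k; rewrite /structure_tensor bracket_ofC // mulmxN mxE. Qed.

Lemma ricci_frame Ric : is_ricci_operator br B Ric ->
  invmx B *m Ric *m B = ricci_tensor structure_tensor.
Proof.
move=> RicE; apply/matrixP => a b.
have -> : (invmx B *m Ric *m B) a b = ip B (Ric *m col b B) (col a B).
  by rewrite ip_col colE !mulmxA -colE [RHS]mxE.
rewrite RicE /ricci_form !mxE [LHS]addrC mulNr.
congr (_ * _ - _ * _); apply: eq_bigr => i _; apply: eq_bigr => j _;
  by rewrite !ip_col mulrC.
Qed.

Lemma der_action_frame Y i j k :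
  der_action (invmx B *m Y *m B) structure_tensor i j k =
  (invmx B *m derivation_defect Y (col i B) (col j B)) k 0.
Proof.
set P := invmx B *m Y *m B.
have Ycol l : Y *m col l B = \sum_m P m l *: col m B.
  rewrite [LHS]frame_expand; apply: eq_bigr => m _; congr (_ *: _).
  by rewrite colE !mulmxA -colE mxE.
have out : act3 P structure_tensor i j k = (invmx B *m (Y *m br (col i B) (col j B))) k 0.
  by rewrite -[in RHS](mulKVmx unitB (br _ _)) !mulmxA -/P -mulmxA mxE.
have in1 : act1 P structure_tensor i j k = (invmx B *m br (Y *m col i B) (col j B)) k 0.
  by rewrite Ycol bracket_of_suml mulmx_sum_scale summxE; apply: eq_bigr => l _; rewrite [RHS]mxE.
have in2 : act2 P structure_tensor i j k = (invmx B *m br (col i B) (Y *m col j B)) k 0.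
  by rewrite Ycol bracket_of_sumr mulmx_sum_scale summxE; apply: eq_bigr => l _; rewrite [RHS]mxE.
by rewrite /der_action /tsub out in1 in2 /derivation_defect mulmxBr mulmxDr opprD addrA !mxE.
Qed.

Lemma derivation_frameP Y : derivation br Y <->
  forall i j k, der_action (invmx B *m Y *m B) structure_tensor i j k = 0.
Proof.
split=> [/derivation_defectP derY i j k | derY].
  by rewrite der_action_frame derY mulmx0 mxE.
have derY_frame i j : derivation_defect Y (col i B) (col j B) = 0.
  by apply: invmx_mulmx_eq0; apply/matrixP => k l; rewrite ord1 -der_action_frame derY mxE.
apply/derivation_defectP => x y.
rewrite (frame_expand x) derivation_defect_suml big1 // => l _.
by rewrite (frame_expand y) derivation_defect_sumr big1 ?scaler0 // => m _; rewrite derY_frame scaler0.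
Qed.

Lemma structure_tensor_eq0 : (forall i j k, structure_tensor i j k = 0) ->
  forall x y, br x y = 0.
Proof.
move=> T0 x y.
have br_frame i j : br (col i B) (col j B) = 0.
  by apply: invmx_mulmx_eq0; apply/matrixP => k l; rewrite ord1 [RHS]mxE; exact: T0.
rewrite (frame_expand x) bracket_of_suml big1 // => l _.
by rewrite (frame_expand y) bracket_of_sumr big1 ?scaler0 // => m _; rewrite br_frame scaler0.
Qed.
End StructureTensor.

Arguments derivation_frameP {R n cst B} unitB Y.

Lemma mxtrace_mul_commutator (R : comPzRingType) (n : nat) (M P Q : 'M[R]_n) :
  M *m P = P *m M -> \tr (M *m (P *m Q - Q *m P)) = 0.
Proof.
move=> MP; rewrite mulmxBr linearB /= mulmxA MP -mulmxA mxtrace_mulC.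
by rewrite -mulmxA subrr.
Qed.

Section RicciOperator.
Variables (R : realType) (n : nat) (cst : 'I_n -> 'I_n -> 'cV[R]_n).
Local Notation br := (bracket_of cst).
Hypothesis cstC : forall i j, cst j i = - cst i j.
Variables (B Ric : 'M[R]_n).
Hypothesis unitB : B \in unitmx.
Hypothesis RicE : is_ricci_operator br B Ric.
Local Notation T := (structure_tensor cst B).
Local Notation conj M := (invmx B *m M *m B).

Lemma mxtrace_conj (M : 'M[R]_n) : \tr (conj M) = \tr M.
Proof. by rewrite mxtrace_mulC mulmxA mulmxV // mul1mx. Qed.

Lemma conj_mulmx (M N : 'M[R]_n) : conj M *m conj N = conj (M *m N).
Proof. by rewrite -!mulmxA mulKVmx. Qed.

Lemma conjVK (M : 'M[R]_n) : conj (B *m M *m invmx B) = M.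
Proof. by rewrite !mulmxA mulVmx // mul1mx -mulmxA mulVmx // mulmx1. Qed.

Lemma trace_ricci_frame (A : 'M[R]_n) :
  \tr (conj Ric *m A) = 1 / 4 * tdot (der_action A T) T.
Proof. by rewrite (ricci_frame unitB RicE) trace_ricci_tensor //; exact: structure_tensorC. Qed.

(* [tr Ric = - |T|^2 / 4] vanishes only for the abelian bracket. *)
Lemma ricci_trace_eq0 : \tr Ric = 0 -> forall x y, br x y = 0.
Proof.
move=> trRic0; apply: (structure_tensor_eq0 unitB); apply: tdot_self_eq0.
move: trRic0; rewrite -mxtrace_conj -[conj Ric]mulmx1 trace_ricci_frame tdot_der_action1.
by move/eqP; rewrite mulf_eq0 oppr_eq0 => /orP[/eqP|/eqP] //; lra.
Qed.

Lemma ricci_trace_derivation X : derivation br X -> \tr (Ric *m X) = 0.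
Proof.
move/(derivation_frameP unitB) => derX.
by rewrite -mxtrace_conj -conj_mulmx trace_ricci_frame tdot0l ?mulr0.
Qed.

(* With [P] the frame matrix of [psi], [tr (Ric [P, P^T])] equals
   [|der_action P^T T|^2 / 4] since [P] is a derivation, and vanishes since
   [Ric] commutes with [P]. *)
Lemma ricci_commuting_derivation_adjoint psi :
  derivation br psi -> Ric *m psi = psi *m Ric ->
  derivation br (B *m (conj psi)^T *m invmx B).
Proof.
move=> /(derivation_frameP unitB) derP commRic.
apply/(derivation_frameP unitB); rewrite conjVK.
apply: tdot_self_eq0; apply/eqP.
have := trace_ricci_frame (conj psi *m (conj psi)^T - (conj psi)^T *m conj psi).
rewrite mxtrace_mul_commutator ?conj_mulmx ?commRic // tdot_der_action_commutator.
by rewrite (tdot0l _ derP) subr0 => /esym/eqP; rewrite mulf_eq0 => /orP[/eqP|//]; lra.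
Qed.

Lemma ricci_commuting_derivation_eq0 psi :
  derivation br psi -> Ric *m psi = psi *m Ric ->
  (forall X, derivation br X -> \tr (X *m psi) = 0) -> psi = 0.
Proof.
move=> derpsi commRic psi_orth.
have := psi_orth _ (ricci_commuting_derivation_adjoint derpsi commRic).
rewrite -mxtrace_conj -conj_mulmx conjVK.
move/mxtrace_tr_mul_eq0 => P0.
have -> : psi = B *m conj psi *m invmx B.
  by rewrite !mulmxA mulmxV // mul1mx -mulmxA mulmxV // mulmx1.
by rewrite P0 mulmx0 mul0mx.
Qed.

End RicciOperator.

Section N7.
Variable R : realType.
Local Notation br := (@n7_bracket R).
Local Notation "Y @ a , b" := (Y (inord a) (inord b)) (at level 10, a at level 8, b at level 8).
Implicit Types (x y : 'cV[R]_7) (Y : 'M[R]_7).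

Lemma sum7 (F : 'I_7 -> R) : \sum_(i < 7) F i =
  F (inord 0) + F (inord 1) + F (inord 2) + F (inord 3) + F (inord 4) + F (inord 5) + F (inord 6).
Proof.
rewrite (eq_bigr (fun i : 'I_7 => F (inord i))); last by move=> i _; rewrite inord_val.
by rewrite !big_ord_recr big_ord0 /= add0r.
Qed.

Lemma inord_eq (a b : nat) : (a < 7)%N -> (b < 7)%N -> ((inord a : 'I_7) == inord b) = (a == b).
Proof. by move=> lta ltb; rewrite -val_eqE /= !inordK. Qed.

Definition vcoord x (k : nat) : R := x (inord k) 0.

Definition n7_bracket_coord x y (k : nat) : R :=
  match k with
  | 3 => vcoord x 1 * vcoord y 2 - vcoord x 2 * vcoord y 1
  | 4 => vcoord x 0 * vcoord y 1 - vcoord x 1 * vcoord y 0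
  | 5 => vcoord x 0 * vcoord y 2 - vcoord x 2 * vcoord y 0
  | 6 => 2 * (vcoord x 0 * vcoord y 3 - vcoord x 3 * vcoord y 0) + (vcoord x 1 * vcoord y 5 - vcoord x 5 * vcoord y 1)
         - (vcoord x 2 * vcoord y 4 - vcoord x 4 * vcoord y 2) + (vcoord x 2 * vcoord y 5 - vcoord x 5 * vcoord y 2)
  | _ => 0
  end.

Lemma n7_bracketE x y k : (k < 7)%N -> vcoord (br x y) k = n7_bracket_coord x y k.
Proof.
move=> ltk; rewrite /vcoord /n7_bracket /bracket_of summxE sum7 !summxE !sum7 !mxE.
rewrite /n7_const !inordK //= /ev !mxE.
by do 7 (case: k ltk => [|k] ltk; first by rewrite !inord_eq //= /vcoord; ring).
Qed.

Lemma n7_constC (i j : 'I_7) : n7_const R j i = - n7_const R i j.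
Proof.
case: i j => [i lti] [j ltj]; rewrite /n7_const /=.
do 7 (case: i lti => [|i] lti; [do 7 (case: j ltj => [|j] ltj; [by rewrite ?oppr0 ?opprK | ]); by [] | ]).
by [].
Qed.

Lemma evE i k : (i < 7)%N -> (k < 7)%N -> vcoord (ev R i) k = (k == i)%:R.
Proof. by move=> lti ltk; rewrite /vcoord /ev mxE inord_eq // andbT. Qed.

Lemma n7_bracket_neq0 : br (ev R 0) (ev R 1) != 0.
Proof.
apply: contraTneq isT => br0.
have := n7_bracketE (ev R 0) (ev R 1) (isT : (4 < 7)%N).
by rewrite br0 /vcoord mxE /= !evE //= mul1r mul0r subr0 => /eqP; rewrite eq_sym oner_eq0.
Qed.

Definition n7_der_entry (t : nat -> R) (a b : nat) : R :=
  match a, b with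
  | 0, 0 => t 0%N | 1, 1 => t 1%N | 2, 2 => t 1%N | 3, 3 => 2 * t 1%N
  | 4, 4 => t 0%N + t 1%N | 5, 5 => t 0%N + t 1%N | 6, 6 => t 0%N + 2 * t 1%N
  | 1, 2 => t 2%N | 4, 5 => t 2%N
  | 3, 0 => t 3%N | 4, 0 => t 4%N | 4, 2 => t 5%N | 5, 0 => t 6%N | 5, 1 => t 7%N
  | 5, 2 => t 8%N | 6, 3 => t 9%N | 6, 4 => t 10%N | 6, 5 => t 11%N
  | 6, 0 => t 12%N | 6, 1 => t 13%N | 6, 2 => t 14%N
  | 3, 2 => (t 6%N + t 11%N - t 4%N) / 2 | 3, 1 => (t 6%N + t 10%N) / 2
  | 4, 1 => t 7%N - t 8%N + t 9%N
  | _, _ => 0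
  end.

Definition n7_der t : 'M[R]_7 := \matrix_(i, j) n7_der_entry t i j.

Lemma n7_derE t a b : (a < 7)%N -> (b < 7)%N -> n7_der t @ a, b = n7_der_entry t a b.
Proof. by move=> lta ltb; rewrite mxE !inordK. Qed.

Lemma vcoord_mulmx Y x k : vcoord (Y *m x) k =
  Y@k,0 * vcoord x 0 + Y@k,1 * vcoord x 1 + Y@k,2 * vcoord x 2 + Y@k,3 * vcoord x 3
  + Y@k,4 * vcoord x 4 + Y@k,5 * vcoord x 5 + Y@k,6 * vcoord x 6.
Proof. by rewrite /vcoord mxE sum7. Qed.

Lemma n7_der_derivation t : derivation br (n7_der t).
Proof.
apply/derivation_defectP => x y; apply/matrixP => k l; rewrite (ord1 l) {l}.
case: k => k ltk; rewrite (_ : Ordinal ltk = inord k); last by apply/val_inj; rewrite /= inordK.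
rewrite /derivation_defect !mxE sum7 -!/(vcoord _ _) !n7_bracketE // !n7_derE //.
rewrite /n7_bracket_coord !vcoord_mulmx !n7_derE //.
by do 7 (case: k ltk => [|k] ltk; first by rewrite /n7_der_entry /=; field).
Qed.

Lemma n7_derivation_coord Y i j k : derivation br Y ->
  (i < 7)%N -> (j < 7)%N -> (k < 7)%N ->
  vcoord (Y *m br (ev R i) (ev R j)) k =
  n7_bracket_coord (Y *m ev R i) (ev R j) k + n7_bracket_coord (ev R i) (Y *m ev R j) k.
Proof. by move=> derY lti ltj ltk; rewrite derY /vcoord mxE -!/(vcoord _ _) !n7_bracketE. Qed.

Lemma vcoord_mulmx_ev Y i k : (i < 7)%N -> vcoord (Y *m ev R i) k = Y@k,i.
Proof. by move=> lti; rewrite /vcoord /ev -colE mxE. Qed.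

Definition n7_der_param Y (k : nat) : R :=
  match k with
  | 0 => Y@0,0 | 1 => Y@1,1 | 2 => Y@1,2 | 3 => Y@3,0 | 4 => Y@4,0 | 5 => Y@4,2
  | 6 => Y@5,0 | 7 => Y@5,1 | 8 => Y@5,2 | 9 => Y@6,3 | 10 => Y@6,4 | 11 => Y@6,5
  | 12 => Y@6,0 | 13 => Y@6,1 | _ => Y@6,2
  end.

(* Pushes the Leibniz rule for [Y] on [(e_i, e_j)], read in coordinate [k],
   for each triple [(i, j, k)] of [l]. *)
Local Ltac leibniz_eqs derY l :=
  lazymatch l with
  | nil => idtac
  | cons (?i, ?j, ?k) ?l' =>
      move: (n7_derivation_coord (i := i) (j := j) (k := k) derY isT isT isT);
      rewrite vcoord_mulmx !n7_bracketE // /n7_bracket_coord ?vcoord_mulmx_ev ?evE //= => ?;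
      leibniz_eqs derY l'
  end.

Local Ltac leibniz_lra derY l :=
  rewrite /n7_der_entry /n7_der_param /=; clear -derY; leibniz_eqs derY l; clear derY; lra.

(* The index triples passed to [leibniz_lra] must parse as [nat]. *)
Local Open Scope nat_scope.
Lemma n7_derivation_param Y : derivation br Y -> Y = n7_der (n7_der_param Y).
Proof.
move=> derY.
have ? : Y@0,1 = n7_der_entry (n7_der_param Y) 0 1 by leibniz_lra derY [:: (1,2,5); (1,3,6)].
have ? : Y@0,2 = n7_der_entry (n7_der_param Y) 0 2 by leibniz_lra derY [:: (1,2,5); (1,3,6); (1,2,4); (2,3,6)].
have ? : Y@0,3 = n7_der_entry (n7_der_param Y) 0 3 by leibniz_lra derY [:: (1,2,0)].
have ? : Y@0,4 = n7_der_entry (n7_der_param Y) 0 4 by leibniz_lra derY [:: (0,1,0)].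
have ? : Y@0,5 = n7_der_entry (n7_der_param Y) 0 5 by leibniz_lra derY [:: (0,2,0)].
have ? : Y@0,6 = n7_der_entry (n7_der_param Y) 0 6 by leibniz_lra derY [:: (0,3,0)].
have ? : Y@1,0 = n7_der_entry (n7_der_param Y) 1 0 by leibniz_lra derY [:: (0,1,3); (0,4,6); (0,2,3); (0,5,6)].
have ? : Y@1,3 = n7_der_entry (n7_der_param Y) 1 3 by leibniz_lra derY [:: (1,2,1)].
have ? : Y@1,4 = n7_der_entry (n7_der_param Y) 1 4 by leibniz_lra derY [:: (0,1,1)].
have ? : Y@1,5 = n7_der_entry (n7_der_param Y) 1 5 by leibniz_lra derY [:: (0,2,1)].
have ? : Y@1,6 = n7_der_entry (n7_der_param Y) 1 6 by leibniz_lra derY [:: (0,3,1)].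
have ? : Y@2,0 = n7_der_entry (n7_der_param Y) 2 0 by leibniz_lra derY [:: (0,1,3); (0,4,6)].
have ? : Y@2,1 = n7_der_entry (n7_der_param Y) 2 1 by leibniz_lra derY [:: (0,2,5); (1,2,3); (0,3,6); (1,5,6)].
have ? : Y@2,2 = n7_der_entry (n7_der_param Y) 2 2 by leibniz_lra derY [:: (0,2,4); (0,2,5); (1,2,3); (0,3,6); (2,5,6)].
have ? : Y@2,3 = n7_der_entry (n7_der_param Y) 2 3 by leibniz_lra derY [:: (1,2,2)].
have ? : Y@2,4 = n7_der_entry (n7_der_param Y) 2 4 by leibniz_lra derY [:: (0,1,2)].
have ? : Y@2,5 = n7_der_entry (n7_der_param Y) 2 5 by leibniz_lra derY [:: (0,2,2)].
have ? : Y@2,6 = n7_der_entry (n7_der_param Y) 2 6 by leibniz_lra derY [:: (0,3,2)].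
have ? : Y@3,1 = n7_der_entry (n7_der_param Y) 3 1 by leibniz_lra derY [:: (0,1,6)].
have ? : Y@3,2 = n7_der_entry (n7_der_param Y) 3 2 by leibniz_lra derY [:: (0,2,6)].
have ? : Y@3,3 = n7_der_entry (n7_der_param Y) 3 3 by leibniz_lra derY [:: (0,2,4); (0,2,5); (1,2,3); (0,3,6); (2,5,6)].
have ? : Y@3,4 = n7_der_entry (n7_der_param Y) 3 4 by leibniz_lra derY [:: (0,1,3); (0,4,6)].
have ? : Y@3,5 = n7_der_entry (n7_der_param Y) 3 5 by leibniz_lra derY [:: (0,1,3); (0,4,6); (0,2,3); (0,5,6)].
have ? : Y@3,6 = n7_der_entry (n7_der_param Y) 3 6 by leibniz_lra derY [:: (0,3,3)].
have ? : Y@4,1 = n7_der_entry (n7_der_param Y) 4 1 by leibniz_lra derY [:: (1,2,6)].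
have ? : Y@4,3 = n7_der_entry (n7_der_param Y) 4 3 by leibniz_lra derY [:: (1,2,5); (1,3,6); (1,2,4); (2,3,6)].
have ? : Y@4,4 = n7_der_entry (n7_der_param Y) 4 4 by leibniz_lra derY [:: (0,1,4)].
have ? : Y@4,5 = n7_der_entry (n7_der_param Y) 4 5 by leibniz_lra derY [:: (0,2,4)].
have ? : Y@4,6 = n7_der_entry (n7_der_param Y) 4 6 by leibniz_lra derY [:: (0,2,0); (1,5,4)].
have ? : Y@5,3 = n7_der_entry (n7_der_param Y) 5 3 by leibniz_lra derY [:: (1,2,5); (1,3,6)].
have ? : Y@5,4 = n7_der_entry (n7_der_param Y) 5 4 by leibniz_lra derY [:: (1,4,6); (0,2,5); (1,2,3); (0,3,6); (1,5,6)].
have ? : Y@5,5 = n7_der_entry (n7_der_param Y) 5 5 by leibniz_lra derY [:: (0,2,4); (1,2,3); (0,3,6); (2,5,6)].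
have ? : Y@5,6 = n7_der_entry (n7_der_param Y) 5 6 by leibniz_lra derY [:: (1,5,5)].
have ? : Y@6,6 = n7_der_entry (n7_der_param Y) 6 6 by leibniz_lra derY [:: (0,2,4); (0,2,5); (1,2,3); (0,3,6); (2,5,6)].
apply/matrixP => a b; rewrite -[a]inord_val -[b]inord_val n7_derE //.
case: a b => [a lta] [b ltb] /=.
do 7 (case: a lta => [|a] lta; [do 7 (case: b ltb => [|b] ltb; [first [assumption | reflexivity] | ]); by [] | ]).
by [].
Qed.
Local Open Scope ring_scope.

Lemma mxtrace7 Y : \tr Y = Y@0,0 + Y@1,1 + Y@2,2 + Y@3,3 + Y@4,4 + Y@5,5 + Y@6,6.
Proof. by rewrite /mxtrace sum7. Qed.

Lemma mulmx7E (M N : 'M[R]_7) a b : (M *m N) @ a, b =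
  M@a,0 * N@0,b + M@a,1 * N@1,b + M@a,2 * N@2,b + M@a,3 * N@3,b + M@a,4 * N@4,b
  + M@a,5 * N@5,b + M@a,6 * N@6,b.
Proof. by rewrite mxE sum7. Qed.

(* Trace-orthogonality to the diagonal derivations diag(1,0,0,0,1,1,1) and
   diag(0,1,1,2,1,1,2) fixes the diagonal of [n7_der t]. *)
Lemma n7_ricci_diag (c : R) t :
  (forall X, derivation br X -> \tr ((c%:M + n7_der t) *m X) = 0) ->
  t 0%N = - c / 2 /\ t 1%N = - c / 2.
Proof.
move=> trX.
have := trX _ (n7_der_derivation (fun k => (k == 0)%:R)).
have := trX _ (n7_der_derivation (fun k => (k == 1)%:R)).
rewrite !(mulmxDl, mxtraceD, mul_scalar_mx, mxtraceZ) !mxtrace7 !mulmx7E !n7_derE //.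
rewrite /n7_der_entry /=.
by move=> tr1 tr0; split; lra.
Qed.

Lemma n7_ricci_trace (c : R) t : t 0%N = - c / 2 -> t 1%N = - c / 2 ->
  \tr (c%:M + n7_der t) = c.
Proof.
move=> t0 t1; rewrite mxtraceD mxtrace_scalar mxtrace7 !n7_derE // /n7_der_entry /= t0 t1.
by rewrite -mulr_natr; field.
Qed.

(* A derivation with [psi e_3 = e_2 + ...], corrected so as to commute with
   [n7_der t] once [t 0 = t 1 = - c / 2]; it is trace-orthogonal to every
   derivation. *)
Definition n7_witness_param (t : nat -> R) (c : R) (k : nat) : R :=
  match k with
  | 2 => 1
  | 4 => -2 * t 6%N / c
  | 5 => 2 * t 7%N / c - 4 * t 8%N / c + 2 * t 9%N / c + 8 * t 2%N * t 7%N / c ^+ 2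
  | 8 => 2 * t 7%N / c
  | 11 => 2 * t 10%N / c
  | 12 => -4 * t 10%N * t 6%N / c ^+ 2
  | 13 => -4 * t 10%N * t 7%N / c ^+ 2
  | 14 => t 13%N / c + (2 * t 10%N * t 7%N - 6 * t 10%N * t 8%N + 3 * t 10%N * t 9%N
          + 2 * t 11%N * t 7%N + t 6%N * t 9%N) / c ^+ 2 + 12 * t 10%N * t 2%N * t 7%N / c ^+ 3
  | _ => 0
  end.

Lemma n7_witness_orth t c u : \tr (n7_der u *m n7_der (n7_witness_param t c)) = 0.
Proof. by rewrite mxtrace7 !mulmx7E !n7_derE // /n7_der_entry /n7_witness_param /=; ring. Qed.

Lemma n7_witness_neq0 t c : n7_der (n7_witness_param t c) != 0.
Proof.
apply: contraTneq isT => psi0.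
by have := n7_derE (n7_witness_param t c) (isT : (1 < 7)%N) (isT : (2 < 7)%N);
  rewrite psi0 mxE /= => /eqP; rewrite eq_sym oner_eq0.
Qed.

Lemma n7_witness_comm c t : c != 0 -> t 0%N = - c / 2 -> t 1%N = - c / 2 ->
  (c%:M + n7_der t) *m n7_der (n7_witness_param t c) =
  n7_der (n7_witness_param t c) *m (c%:M + n7_der t).
Proof.
move=> c_neq0 t0 t1; rewrite mulmxDl mulmxDr scalar_mxC; congr (_ + _).
apply/matrixP => a b; rewrite -[a]inord_val -[b]inord_val !mulmx7E !n7_derE //.
case: a b => [a lta] [b ltb] /=.
do 7 (case: a lta => [|a] lta; [do 7 (case: b ltb => [|b] ltb;
  [rewrite /n7_der_entry /n7_witness_param /= ?t0 ?t1; field => // | ]); by [] | ]).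
by [].
Qed.

End N7.

Theorem mainTheorem8 (R : realType) : ~ einstein_nilradical (@n7_bracket R).
Proof.
move=> [B [unitB [c [D [derD RicE]]]]].
move: RicE; rewrite (n7_derivation_param derD); set t := n7_der_param D => RicE.
have [t0 t1] := n7_ricci_diag (ricci_trace_derivation (@n7_constC R) unitB RicE).
have c_neq0 : c != 0.
  apply/eqP => c0; move/eqP: (n7_bracket_neq0 R); apply.
  by apply: (ricci_trace_eq0 (@n7_constC R) unitB RicE); rewrite n7_ricci_trace // c0.
move/eqP: (n7_witness_neq0 t c); apply.
apply: (ricci_commuting_derivation_eq0 (@n7_constC R) unitB RicE).
- exact: n7_der_derivation.
- exact: n7_witness_comm.
- by move=> X /n7_derivation_param ->; exact: n7_witness_orth.
Qed.
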